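(* Let $p$ be an odd prime, $\gamma\ge1$, $0\le\rho\le\gamma$, and \[G=\langle a,b:[a,b]^{p^\gamma}=[a,b,a]=[a,b,b]=1,\ a^{p^\gamma}=[a,b]^{p^\rho},\ b^{p^\gamma}=1\rangle.\] Let $1\le\delta\le\gamma$. Then (1) $\langle a^{p^\delta},b^{p^\delta},[a,b]\rangle/\langle[a,b]^{p^\delta}\rangle\cong C_{p^{\gamma-\rho}}\times C_{p^{\gamma-\delta}}\times C_{p^\rho}$ if $\rho<\delta<\gamma-\rho$, and $\cong C_{p^{\gamma-\delta}}\times C_{p^{\gamma-\delta}}\times C_{p^\delta}$ otherwise; (2) $\langle a^{p^\delta},b^{p^\delta},[a,b]\rangle/\langle[a,b]^{p^{\delta-1}}\rangle\cong C_{p^{\gamma-\rho-1}}\times C_{p^{\gamma-\delta}}\times C_{p^\rho}$ if $\rho<\delta<\gamma-\rho$, and $\cong C_{p^{\gamma-\delta}}\times C_{p^{\gamma-\delta}}\times C_{p^{\delta-1}}$ otherwise.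
   Context: $[g,h]=g^{-1}h^{-1}gh$, $[x,y,z]=[[x,y],z]$; $C_m$ is the cyclic group of order $m$. (This group is the two-generator $p$-group of class 2 and order $p^{3\gamma}$ with parameters $(\alpha,\beta,\gamma;\rho,\sigma)=(\gamma,\gamma,\gamma;\rho,\gamma)$.) *)

From mathcomp Require Import all_boot all_order all_algebra all_fingroup all_solvable.
Set Implicit Arguments. Unset Strict Implicit. Unset Printing Implicit Defensive.

(* The external direct product C_m x C_n x C_k of cyclic groups of orders
   m, n, k (m, n, k >= 1): Zp m is the cyclic group of order m inside 'Z_m
   (it is all of 'Z_m when m > 1, and the trivial group when m = 1). *)
Definition C3 (m n k : nat) : {set ('Z_m * 'Z_n * 'Z_k)%type} :=
  setX (setX (Zp m) (Zp n)) (Zp k).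

From mathcomp Require Import all_boot all_order all_algebra all_fingroup all_solvable.
From mathcomp Require Import zify.
Set Implicit Arguments. Unset Strict Implicit. Unset Printing Implicit Defensive.
Local Open Scope group_scope.

(* Write c = [a, b], which is central in G = <a, b>, and K = <c^(p^e)> with
   e = delta or delta - 1.  As G/H is abelian and generated by two elements of
   order dividing p^delta, and |K| <= p^(gamma - e), the order p^(3 gamma) of G
   forces |H/K| >= p^(2 (gamma - delta) + e).  The images x, y, z of a^(p^delta),
   b^(p^delta), c generate the abelian group H/K, with
   x^(p^(gamma - delta)) = z^(p^rho), y^(p^(gamma - delta)) = 1, z^(p^e) = 1.
   Replacing z by z x^(-p^(gamma - delta - rho)) when rho < delta < gamma - rho,
   or x by x z^(-p^(rho - gamma + delta)) when gamma - delta <= rho, gives three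
   commuting generators whose orders divide three prime powers of total exponent
   2 (gamma - delta) + e, so H/K is the direct product of the cyclic groups they
   generate. *)

Lemma exists_Zp_expg (gT : finGroupType) (x : gT) r :
  (0 < r)%N -> x ^+ r = 1 -> exists2 i : 'Z_r, i \in Zp r & x ^+ i = x.
Proof.
move=> r_gt0 xr; have [r1 | r_neq1] := eqVneq r 1%N.
  by exists 1; rewrite ?group1 //= -[RHS]expg1 -r1 xr.
have r_gt1 : (1 < r)%N by rewrite ltn_neqAle eq_sym r_neq1.
by exists (inZp 1); rewrite ?mem_Zp //= (expg_mod _ xr) Zp_cast // expg1.
Qed.

Section GeneratorsOfC3.

Variables (gT : finGroupType) (u v w : gT) (m n k : nat).
Hypotheses (m_gt0 : (0 < m)%N) (n_gt0 : (0 < n)%N) (k_gt0 : (0 < k)%N).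
Hypotheses (um : u ^+ m = 1) (vn : v ^+ n = 1) (wk : w ^+ k = 1).
Hypotheses (cuv : commute u v) (cuw : commute u w) (cvw : commute v w).

Definition C3_fun (t : 'Z_m * 'Z_n * 'Z_k) : gT := u ^+ t.1.1 * v ^+ t.1.2 * w ^+ t.2.

Lemma C3_funM : {in C3 m n k &, {morph C3_fun : s t / s * t}}.
Proof.
(* Elements of 'Z_r are added modulo (Zp_trunc r).+2, which is r unless r = 1. *)
have expZp (x : gT) r : (0 < r)%N -> x ^+ r = 1 -> x ^+ (Zp_trunc r).+2 = 1.
  move=> r_gt0 xr; have [r1 | r_neq1] := eqVneq r 1%N.
    by move: xr; rewrite r1 expg1 => ->; rewrite expg1n.
  by rewrite Zp_cast // ltn_neqAle eq_sym r_neq1.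
have um' := expZp u m m_gt0 um; have vn' := expZp v n n_gt0 vn.
have wk' := expZp w k k_gt0 wk.
move=> [[i j] l] [[i' j'] l'] _ _; rewrite /C3_fun /=.
rewrite (expg_mod _ um') (expg_mod _ vn') (expg_mod _ wk') !expgD !mulgA.
congr (_ * _).
rewrite -(mulgA _ (w ^+ l)) (commuteX2 _ _ (commute_sym cuw)) mulgA.
rewrite -(mulgA _ (w ^+ l)) (commuteX2 _ _ (commute_sym cvw)) mulgA.
by rewrite -(mulgA (u ^+ i)) -(commuteX2 _ _ (commute_sym cuv)) mulgA.
Qed.

Definition C3_morphism := Morphism C3_funM.

Lemma C3_morphim : C3_morphism @* C3 m n k = <<[set u; v; w]>>.
Proof.
apply/eqP; rewrite eqEsubset; apply/andP; split.
  apply/subsetP => _ /morphimP[[[i j] l] _ _ ->].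
  by rewrite /= /C3_fun !groupM ?groupX ?mem_gen // !inE eqxx ?orbT.
have [i Zp_i ui] := exists_Zp_expg m_gt0 um.
have [j Zp_j vj] := exists_Zp_expg n_gt0 vn.
have [l Zp_l wl] := exists_Zp_expg k_gt0 wk.
have im t : t \in C3 m n k -> C3_fun t \in C3_morphism @* C3 m n k.
  by move=> t_C3; apply: mem_morphim.
rewrite gen_subG !subUset !sub1set.
have -> : u = C3_fun (i, 1, 1) by rewrite /C3_fun /= !mulg1.
have -> : v = C3_fun (1, j, 1) by rewrite /C3_fun /= mulg1 mul1g.
have -> : w = C3_fun (1, 1, l) by rewrite /C3_fun /= !mul1g.
by rewrite !im // !inE ?Zp_i ?Zp_j ?Zp_l !group1.
Qed.

Lemma gen3_isog_C3 : (m * n * k <= #|<<[set u; v; w]>>|)%N ->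
  <<[set u; v; w]>> \isog C3 m n k.
Proof.
move=> card_ge; have card_C3 : #|C3 m n k| = (m * n * k)%N.
  by rewrite /C3 !cardsX !card_Zp.
have inj : 'injm C3_morphism.
  rewrite -card_im_injm C3_morphim eqn_leq card_C3 card_ge andbT.
  by rewrite -card_C3 -C3_morphim leq_morphim.
by rewrite isog_sym; apply/isogP; exists C3_morphism; last exact: C3_morphim.
Qed.

End GeneratorsOfC3.

Lemma gen_setU1_mulr (gT : finGroupType) (A : {set gT}) (z t : gT) :
  t \in <<A>> -> <<A :|: [set z * t]>> = <<A :|: [set z]>>.
Proof.
have gen_sub (y s : gT) : s \in <<A>> -> <<A :|: [set y * s]>> \subset <<A :|: [set y]>>.
  move=> sA; have sAAy : <<A>> \subset <<A :|: [set y]>> by rewrite genS ?subsetUl.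
  have yAy : y \in <<A :|: [set y]>> by rewrite mem_gen // !inE eqxx orbT.
  rewrite gen_subG subUset sub1set (subset_trans (subset_gen A)) //.
  by rewrite groupM // (subsetP sAAy).
move=> tA; apply/eqP; rewrite eqEsubset gen_sub //=.
by rewrite -{1}[z](mulgK t) gen_sub ?groupV.
Qed.

Lemma card_quotient_gen2_leq (gT : finGroupType) (a b : gT) (H : {group gT}) n :
  (0 < n)%N -> H \subset <<[set a; b]>> -> <<[set a; b]>>^`(1) \subset H ->
  a ^+ n \in H -> b ^+ n \in H -> (#|<<[set a; b]>> / H| <= n * n)%N.
Proof.
move=> n_gt0 sHG sG'H aH bH; set G := <<[set a; b]>>.
have nHG : G \subset 'N(H) by apply/normal_norm/sub_der1_normal.
have aN : a \in 'N(H) by rewrite (subsetP nHG) // mem_gen // !inE eqxx.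
have bN : b \in 'N(H) by rewrite (subsetP nHG) // mem_gen // !inE eqxx orbT.
have order_leq g : g \in 'N(H) -> g ^+ n \in H -> (#|<[coset H g]>| <= n)%N.
  move=> gN gnH; rewrite -orderE dvdn_leq // order_dvdn -morphX //=.
  exact/eqP/coset_id.
have cGH : commute <[coset H a]> <[coset H b]>.
  apply/centC/(sub_abelian_cent2 (sub_der1_abelian sG'H));
    by rewrite cycle_subG mem_quotient // mem_gen // !inE eqxx ?orbT.
have defG : <[a]> <*> <[b]> = G by rewrite joing_idl joing_idr.
rewrite -defG quotientY ?cycle_subG // !quotient_cycle //.
rewrite comm_joingE //; apply: leq_trans (leq_mul (order_leq _ aN aH) (order_leq _ bN bH)).
by rewrite mul_cardG leq_pmulr ?cardG_gt0.
Qed.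

Section QuotientStructure.

Variables (gT : finGroupType) (p gamma rho delta e : nat) (a b : gT).
Let c := [~ a, b].
Hypotheses (p_pr : prime p) (rho_le_gamma : (rho <= gamma)%N).
Hypotheses (c_pgamma : c ^+ (p ^ gamma) = 1) (cca : [~ c, a] = 1) (ccb : [~ c, b] = 1).
Hypotheses (a_pgamma : a ^+ (p ^ gamma) = c ^+ (p ^ rho)) (b_pgamma : b ^+ (p ^ gamma) = 1).
Hypothesis card_G : #|<<[set a; b]>>| = (p ^ (3 * gamma))%N.
Hypotheses (delta_le_gamma : (delta <= gamma)%N) (e_le_delta : (e <= delta)%N).

Let G : {group gT} := <<[set a; b]>>%G.
Let H : {group gT} := <<[set a ^+ (p ^ delta); b ^+ (p ^ delta); c]>>%G.
Let K : {group gT} := <<[set c ^+ (p ^ e)]>>%G.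

Let expn_p_gt0 i : (0 < p ^ i)%N.
Proof. by rewrite expn_gt0 prime_gt0. Qed.

Lemma commute_comm_a : commute c a. Proof. exact/commgP/eqP. Qed.
Lemma commute_comm_b : commute c b. Proof. exact/commgP/eqP. Qed.

Lemma comm_central : c \in 'C(G).
Proof.
rewrite -sub_cent1 gen_subG subUset !sub1set.
by apply/andP; split; apply/cent1P/commute_sym; [apply: commute_comm_a | apply: commute_comm_b].
Qed.

Lemma a_in_G : a \in G. Proof. by rewrite mem_gen // !inE eqxx. Qed.
Lemma b_in_G : b \in G. Proof. by rewrite mem_gen // !inE eqxx orbT. Qed.
Lemma comm_in_H : c \in H. Proof. by rewrite mem_gen // !inE eqxx !orbT. Qed.

Lemma sub_H_G : H \subset G.
Proof. by rewrite gen_subG !subUset !sub1set !groupX ?groupR ?a_in_G ?b_in_G. Qed.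

Lemma der1_sub_H : G^`(1) \subset H.
Proof.
have defG : <[a]> <*> <[b]> = G by rewrite joing_idl joing_idr.
by rewrite -defG der1_joing_cycles ?defG ?comm_central // cycle_subG comm_in_H.
Qed.

Lemma sub_H_centK : H \subset 'C(K).
Proof.
rewrite centsC gen_subG sub1set groupX //.
exact: subsetP (centS sub_H_G) _ comm_central.
Qed.

Lemma norm_K_H : H \subset 'N(K).
Proof. exact: cents_norm sub_H_centK. Qed.

Lemma card_K_leq : (#|K| <= p ^ (gamma - e))%N.
Proof.
rewrite [#|K|]/(#[c ^+ (p ^ e)]) dvdn_leq // order_dvdn -expgM -expnD.
by rewrite subnKC ?c_pgamma // (leq_trans e_le_delta).
Qed.

Lemma card_quotient_geq : (p ^ (2 * (gamma - delta) + e) <= #|H / K|)%N.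
Proof.
have sKH : K \subset H by rewrite gen_subG sub1set groupX ?comm_in_H.
have nHG : G \subset 'N(H) by apply/normal_norm/sub_der1_normal/sub_H_G/der1_sub_H.
have card_GH : (#|G / H| <= p ^ delta * p ^ delta)%N.
  by apply: card_quotient_gen2_leq sub_H_G der1_sub_H _ _;
    rewrite // mem_gen // !inE eqxx ?orbT.
rewrite -(@leq_pmul2r (p ^ delta * p ^ delta * p ^ (gamma - e))) ?muln_gt0 ?expn_p_gt0 //.
have -> : (p ^ (2 * (gamma - delta) + e) * (p ^ delta * p ^ delta * p ^ (gamma - e))
           = p ^ (3 * gamma))%N.
  by rewrite -!expnD; congr expn; lia.
rewrite -card_G -(Lagrange sub_H_G) -(Lagrange sKH) -(card_quotient nHG) -(card_quotient norm_K_H).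
rewrite [(#|K| * _)%N]mulnC -mulnA leq_mul // mulnC.
by rewrite leq_mul ?card_K_leq.
Qed.

Let x := coset K (a ^+ (p ^ delta)).
Let y := coset K (b ^+ (p ^ delta)).
Let z := coset K c.

Let a_delta_in_H : a ^+ (p ^ delta) \in H. Proof. by rewrite mem_gen // !inE eqxx. Qed.
Let b_delta_in_H : b ^+ (p ^ delta) \in H. Proof. by rewrite mem_gen // !inE eqxx orbT. Qed.
Let a_delta_in_N : a ^+ (p ^ delta) \in 'N(K). Proof. exact: subsetP norm_K_H _ a_delta_in_H. Qed.
Let b_delta_in_N : b ^+ (p ^ delta) \in 'N(K). Proof. exact: subsetP norm_K_H _ b_delta_in_H. Qed.
Let comm_in_N : c \in 'N(K). Proof. exact: subsetP norm_K_H _ comm_in_H. Qed.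

Lemma quotient_H_gen : H / K = <<[set x; y; z]>>.
Proof.
rewrite quotient_gen ?subUset ?sub1set ?a_delta_in_N ?b_delta_in_N ?comm_in_N //.
by rewrite !quotientU !quotient_set1.
Qed.

Lemma commute_xz : commute x z.
Proof.
by rewrite /commute -!morphM // (commute_sym (commuteX _ commute_comm_a)).
Qed.

Lemma commute_yz : commute y z.
Proof.
by rewrite /commute -!morphM // (commute_sym (commuteX _ commute_comm_b)).
Qed.

Lemma commute_xy : commute x y.
Proof.
have cac := commute_sym commute_comm_a; have cbc := commute_sym commute_comm_b.
apply/commgP; rewrite -morphR //= commXXg //.
have -> : (p ^ delta * p ^ delta = p ^ e * p ^ (delta + delta - e))%N.
  by rewrite -!expnD subnKC // (leq_trans e_le_delta) // leq_addr.
by rewrite expgM coset_id // groupX // mem_gen // inE.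
Qed.

Lemma expg_x : x ^+ (p ^ (gamma - delta)) = z ^+ (p ^ rho).
Proof. by rewrite -!morphX //= -expgM -expnD subnKC // a_pgamma. Qed.

Lemma expg_y : y ^+ (p ^ (gamma - delta)) = 1.
Proof. by rewrite -!morphX //= -expgM -expnD subnKC // b_pgamma morph1. Qed.

Lemma expg_z : z ^+ (p ^ e) = 1.
Proof. by rewrite -morphX //= coset_id // mem_gen // inE. Qed.

Lemma quotient_isog_C3 (u v w : coset_of K) i j l :
  H / K = <<[set u; v; w]>> ->
  u ^+ (p ^ i) = 1 -> v ^+ (p ^ j) = 1 -> w ^+ (p ^ l) = 1 ->
  commute u v -> commute u w -> commute v w ->
  (i + j + l = 2 * (gamma - delta) + e)%N ->
  H / K \isog C3 (p ^ i) (p ^ j) (p ^ l).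
Proof.
move=> defHK ui vj wl cuv cuw cvw sum_ijl; rewrite defHK.
by apply: gen3_isog_C3; rewrite // -defHK -!expnD sum_ijl card_quotient_geq.
Qed.

Lemma quotient_isog_mid : (delta <= e.+1)%N -> (rho < delta < gamma - rho)%N ->
  H / K \isog C3 (p ^ (gamma - rho - (delta - e))) (p ^ (gamma - delta)) (p ^ rho).
Proof.
move=> delta_le_e1 /andP[rho_lt_delta delta_lt].
pose t := (x ^+ (p ^ (gamma - delta - rho)))^-1.
apply: (@quotient_isog_C3 x y (z * t)).
- rewrite quotient_H_gen /t gen_setU1_mulr //.
  by rewrite groupV groupX // mem_gen // !inE eqxx.
- have -> : (gamma - rho - (delta - e) = (gamma - delta) + (e - rho))%N by lia.
  by rewrite expnD expgM expg_x -expgM -expnD subnKC ?expg_z //; lia.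
- exact: expg_y.
- rewrite expgMn; last exact: commuteV (commuteX _ (commute_sym commute_xz)).
  by rewrite expgVn -expgM -expnD subnK ?expg_x ?mulgV //; lia.
- exact: commute_xy.
- exact: commuteM commute_xz (commuteV (commuteX _ (commute_refl x))).
- exact: commuteM commute_yz (commuteV (commuteX _ (commute_sym commute_xy))).
- lia.
Qed.

Lemma quotient_isog_rho_large : (gamma - delta <= rho)%N ->
  H / K \isog C3 (p ^ (gamma - delta)) (p ^ (gamma - delta)) (p ^ e).
Proof.
move=> rho_large; pose t := (z ^+ (p ^ (rho - (gamma - delta))))^-1.
have defA s : [set s; y; z] = [set y; z] :|: [set s] by rewrite -setUA setUC.
apply: (@quotient_isog_C3 (x * t) y z).
- rewrite quotient_H_gen !defA /t gen_setU1_mulr //.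
  by rewrite groupV groupX // mem_gen // !inE eqxx orbT.
- rewrite expgMn; last exact: commuteV (commuteX _ commute_xz).
  by rewrite expgVn -expgM -expnD subnK // expg_x mulgV.
- exact: expg_y.
- exact: expg_z.
- apply: commute_sym.
  exact: commuteM (commute_sym commute_xy) (commuteV (commuteX _ commute_yz)).
- apply: commute_sym.
  exact: commuteM (commute_sym commute_xz) (commuteV (commuteX _ (commute_refl z))).
- exact: commute_yz.
- lia.
Qed.

Lemma quotient_isog_delta_small : (delta <= rho)%N ->
  H / K \isog C3 (p ^ (gamma - delta)) (p ^ (gamma - delta)) (p ^ e).
Proof.
move=> delta_le_rho; apply: quotient_isog_C3 quotient_H_gen _ expg_y expg_z
  commute_xy commute_xz commute_yz _; last by lia.
by rewrite expg_x -(subnKC (leq_trans e_le_delta delta_le_rho)) expnD expgM expg_z expg1n.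
Qed.

Lemma quotient_isog_cases : (delta <= e.+1)%N ->
  ((rho < delta < gamma - rho)%N ->
     H / K \isog C3 (p ^ (gamma - rho - (delta - e))) (p ^ (gamma - delta)) (p ^ rho)) /\
  (~~ (rho < delta < gamma - rho)%N ->
     H / K \isog C3 (p ^ (gamma - delta)) (p ^ (gamma - delta)) (p ^ e)).
Proof.
move=> delta_le_e1; split=> [|not_mid]; first exact: quotient_isog_mid.
have [|rho_small] := leqP (gamma - delta) rho; first exact: quotient_isog_rho_large.
by apply: quotient_isog_delta_small; move: not_mid; lia.
Qed.

End QuotientStructure.

Theorem lemma4p4 (gT : finGroupType) (p gamma rho delta : nat) (a b : gT) :
  prime p -> odd p -> (0 < gamma)%N -> (rho <= gamma)%N ->
  (* G = <a, b> satisfies the defining relations ... *)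
  [~ a, b] ^+ (p ^ gamma) = 1 -> [~ a, b, a] = 1 -> [~ a, b, b] = 1 ->
  a ^+ (p ^ gamma) = [~ a, b] ^+ (p ^ rho) -> b ^+ (p ^ gamma) = 1 ->
  (* ... and has the order p^(3 gamma) of the presented group, so G is the
     presented group with a, b its generators *)
  #|<<[set a; b]>>| = (p ^ (3 * gamma))%N ->
  (1 <= delta <= gamma)%N ->
  let H := <<[set a ^+ (p ^ delta); b ^+ (p ^ delta); [~ a, b]]>> in
  let K1 := <<[set [~ a, b] ^+ (p ^ delta)]>> in
  let K2 := <<[set [~ a, b] ^+ (p ^ delta.-1)]>> in
  [/\ (rho < delta < gamma - rho)%N ->
        H / K1 \isog C3 (p ^ (gamma - rho)) (p ^ (gamma - delta)) (p ^ rho),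
      ~~ (rho < delta < gamma - rho)%N ->
        H / K1 \isog C3 (p ^ (gamma - delta)) (p ^ (gamma - delta)) (p ^ delta),
      (rho < delta < gamma - rho)%N ->
        H / K2 \isog C3 (p ^ (gamma - rho - 1)) (p ^ (gamma - delta)) (p ^ rho)
    & ~~ (rho < delta < gamma - rho)%N ->
        H / K2 \isog C3 (p ^ (gamma - delta)) (p ^ (gamma - delta)) (p ^ delta.-1)].
Proof.
move=> p_pr _ _ rho_le cg cca ccb ag bg card_G /andP[delta_gt0 delta_le] H K1 K2.
have isog_e := quotient_isog_cases p_pr rho_le cg cca ccb ag bg card_G delta_le.
have [mid1 edge1] := isog_e delta (leqnn delta) (leqnSn delta).
have [mid2 edge2] := isog_e delta.-1 (leq_pred delta) (eq_leq (esym (prednK delta_gt0))).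
rewrite subnn subn0 in mid1; rewrite (_ : delta - delta.-1 = 1)%N in mid2; last lia.
by split.
Qed.
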